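(* Let $b'>b>1$. For every instance, the partially naive (pessimistic) agent with true bias $b$ and believed bias $b'$ satisfies $C_p(s)\le b'\cdot C_o(s)$; that is, its cost ratio is at most $b'$.
   Context: An instance is a finite directed acyclic graph $G=(V,E)$ with nonnegative edge costs $c(u,v)$, start node $s$ and target node $t$, where $t$ is the unique node with no outgoing edges; $C_o(u)$ is the minimum cost of a $u$–$t$ path. The sophisticated agent with bias $b'$ is defined by $C_s'(t)=0$ and, for $u\ne t$, $S_s'(u)\in\arg\min_{v:(u,v)\in E}(b'\,c(u,v)+C_s'(v))$, $C_s'(u)=c(u,S_s'(u))+C_s'(S_s'(u))$. The partially naive agent with true bias $b$ and believed bias $b'$: $C_p(t)=0$, and for $u\neq t$, $S_p(u)\in\arg\min_{v:(u,v)\in E}(b\,c(u,v)+C_s'(v))$, $C_p(u)=c(u,S_p(u))+C_p(S_p(u))$; its incurred cost is $C_p(s)$, and its cost ratio is $C_p(s)/C_o(s)$. *)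

From mathcomp Require Import all_boot all_order all_algebra.
Set Implicit Arguments. Unset Strict Implicit. Unset Printing Implicit Defensive.
Import Order.TTheory GRing.Theory Num.Theory.
Local Open Scope ring_scope.

Fixpoint path_cost (R : numDomainType) (V : Type) (c : V -> V -> R)
    (x : V) (p : seq V) : R :=
  match p with
  | [::] => 0
  | y :: p' => c x y + path_cost c y p'
  end.

Definition acyclic (V : eqType) (E : rel V) : Prop :=
  forall u (p : seq V), path E u p -> last u p = u -> p = [::].

Definition unique_sink (V : finType) (E : rel V) (t : V) : Prop :=
  forall u, (forall v, ~~ E u v) <-> u = t.

Definition instance (R : numDomainType) (V : finType) (E : rel V)
    (c : V -> V -> R) (t : V) : Prop :=
  [/\ acyclic E, unique_sink E t & forall u v, E u v -> 0 <= c u v].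

Definition min_path_cost (R : numDomainType) (V : eqType) (E : rel V)
    (c : V -> V -> R) (t u : V) (x : R) : Prop :=
  (exists p : seq V, [/\ path E u p, last u p = t & path_cost c u p = x]) /\
  (forall p : seq V, path E u p -> last u p = t -> x <= path_cost c u p).

Definition sophisticated (R : numDomainType) (V : eqType) (E : rel V)
    (c : V -> V -> R) (t : V) (b' : R) (S : V -> V) (C : V -> R) : Prop :=
  C t = 0 /\
  forall u, u != t ->
    [/\ E u (S u),
        (forall v, E u v -> b' * c u (S u) + C (S u) <= b' * c u v + C v)
      & C u = c u (S u) + C (S u)].

(* (Sp, Cp) is the partially naive agent with true bias b, planning against
   the sophisticated cost-to-go Cs (computed with believed bias b'). *)
Definition partially_naive (R : numDomainType) (V : eqType) (E : rel V)
    (c : V -> V -> R) (t : V) (b : R) (Cs : V -> R)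
    (Sp : V -> V) (Cp : V -> R) : Prop :=
  Cp t = 0 /\
  forall u, u != t ->
    [/\ E u (Sp u),
        (forall v, E u v -> b * c u (Sp u) + Cs (Sp u) <= b * c u v + Cs v)
      & Cp u = c u (Sp u) + Cp (Sp u)].

(* The naive agent is pessimistic: it plans against the sophisticated cost-to-go
   of bias b' > b.  At every node its chosen edge is at least as expensive as the
   sophisticated agent's (the two choices are optimal for weights b < b'), hence
   one step of the naive walk costs no more, in true cost plus sophisticated
   cost-to-go, than one step of the sophisticated walk; along the (finite) naive
   walk this gives C_p(s) <= C_s'(s).  Finally a sophisticated agent of bias b'
   pays at most b' times the cost of any path, since C_s'(u) <= b' c(u,S(u)) +
   C_s'(S(u)) and S(u) minimizes the right-hand side. *)

From mathcomp Require Import all_boot all_order all_algebra.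
From mathcomp Require Import lra.
Set Implicit Arguments. Unset Strict Implicit. Unset Printing Implicit Defensive.
Import Order.TTheory GRing.Theory Num.Theory.
Local Open Scope ring_scope.

Section WalksToSink.

Variables (V : eqType) (E : rel V) (t : V) (f : V -> V).
Hypothesis f_edge : forall u, u != t -> E u (f u).

Lemma path_traject_avoiding x n :
  (forall k, (k < n)%N -> iter k f x != t) -> path E x (traject f (f x) n).
Proof.
elim: n x => [|n IHn] x //= avoid; apply/andP; split.
  exact/f_edge/(avoid 0%N).
by apply: IHn => k lt_kn; rewrite -iterSr; apply: avoid.
Qed.

Lemma looping_iter_reaches_sink (x : V) (n : nat) :
  acyclic E -> looping f x n -> exists k, iter k f x = t.
Proof.
move=> acyc /trajectP[i lt_in eq_ni].
have [/trajectP[k _ ->]|t_notin] := boolP (t \in traject f x n); first by exists k.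
have avoid k : (k < n - i)%N -> iter k f (iter i f x) != t.
  move=> lt_k; rewrite -iterD; apply: contraNneq t_notin => <-.
  by apply/trajectP; exists (k + i)%N; rewrite // addnC -ltn_subRL.
have := acyc _ _ (path_traject_avoiding avoid).
rewrite last_traject -iterD subnK ?(ltnW lt_in) // -eq_ni => /(_ erefl).
by move/(congr1 size); rewrite size_traject => /eqP; rewrite subn_eq0 leqNgt lt_in.
Qed.

End WalksToSink.

Lemma iter_reaches_sink (V : finType) (E : rel V) (t : V) (f : V -> V) x :
  acyclic E -> (forall u, u != t -> E u (f u)) -> exists k, iter k f x = t.
Proof.
move=> acyc f_edge.
exact: (looping_iter_reaches_sink f_edge acyc (looping_order f x)).
Qed.

Section Agents.

Variables (R : realDomainType) (V : eqType) (E : rel V) (c : V -> V -> R) (t : V).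

Lemma sophisticated_cost_le_scaled_path (b' : R) (S : V -> V) (C : V -> R) u p :
  1 <= b' -> (forall v w, E v w -> 0 <= c v w) -> (forall v, ~~ E t v) ->
  sophisticated E c t b' S C ->
  path E u p -> last u p = t -> C u <= b' * path_cost c u p.
Proof.
move=> b'_ge1 c_ge0 t_sink [Ct HS].
elim: p u => [|y p IHp] u /=; first by move=> _ ->; rewrite Ct mulr0.
case/andP=> Euy py lastp.
have u_neq_t : u != t by apply: contraTneq Euy => ->; apply: t_sink.
have [Eus S_min ->] := HS u u_neq_t.
have := c_ge0 _ _ Eus; have := S_min y Euy; have := IHp y py lastp; nra.
Qed.

(* Adding the hypotheses gives (b' - b) (z - x) <= 0, i.e. z <= x, so lowering
   the weight of x from b to 1 keeps the first inequality. *)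
Lemma biased_choices_le (b b' x y z w : R) :
  1 <= b -> b < b' ->
  b * x + y <= b * z + w -> b' * z + w <= b' * x + y -> x + y <= z + w.
Proof. nra. Qed.

Variables (b b' : R) (Ss : V -> V) (Cs : V -> R) (Sp : V -> V) (Cp : V -> R).
Hypotheses (b_ge1 : 1 <= b) (b_lt_b' : b < b').
Hypotheses (soph : sophisticated E c t b' Ss Cs)
           (naive : partially_naive E c t b Cs Sp Cp).

Lemma partially_naive_gap_le_step u :
  u != t -> Cp u - Cs u <= Cp (Sp u) - Cs (Sp u).
Proof.
move=> u_neq_t.
have [Eup p_min ->] := naive.2 u u_neq_t.
have [Eus s_min ->] := soph.2 u u_neq_t.
have := biased_choices_le b_ge1 b_lt_b' (p_min _ Eus) (s_min _ Eup); lra.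
Qed.

Lemma partially_naive_le_sophisticated n u :
  iter n Sp u = t -> Cp u <= Cs u.
Proof.
elim: n u => [|n IHn] u; first by move=> /= ->; rewrite naive.1 soph.1.
rewrite iterSr => /IHn le_Sp; have [-> | u_neq_t] := eqVneq u t.
  by rewrite naive.1 soph.1.
by have := partially_naive_gap_le_step u_neq_t; lra.
Qed.

End Agents.

Theorem claim6 (R : realFieldType) (b b' : R) (V : finType) (E : rel V)
    (c : V -> V -> R) (s t : V)
    (Ss : V -> V) (Cs : V -> R) (Sp : V -> V) (Cp : V -> R) (Co_s : R) :
  1 < b -> b < b' ->
  instance E c t ->
  sophisticated E c t b' Ss Cs ->
  partially_naive E c t b Cs Sp Cp ->
  min_path_cost E c t s Co_s ->
  Cp s <= b' * Co_s.
Proof.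
move=> b_gt1 b_lt_b' [acyc sink c_ge0] soph naive [[p [Ep lastp <-]] _].
have t_sink : forall v, ~~ E t v by apply/sink.
have Sp_edge : forall u, u != t -> E u (Sp u) by move=> u /(naive.2 u)[].
have [n reach] := iter_reaches_sink s acyc Sp_edge.
apply: le_trans (partially_naive_le_sophisticated (ltW b_gt1) b_lt_b' soph naive reach) _.
have b'_ge1 : 1 <= b' by apply: ltW; apply: lt_trans b_lt_b'.
exact: sophisticated_cost_le_scaled_path b'_ge1 c_ge0 t_sink soph Ep lastp.
Qed.
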